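(* Let $w=w_0w_1w_2\ldots$ be a one-sided infinite fixed word of a substitution on $\mathcal A=\{a_1,\dots,a_k\}$, let $\ell_1,\dots,\ell_k$ be positive rational interval lengths, and define $g(a_j)=\ell_j$. Let $0=t_0<t_1<\cdots$ be the geometric realisation of $w$ and $G(X)=\sum_{n\ge0}t_nX^n$. Then the sequence $(g(w_n))_{n\ge0}$ is not eventually periodic if and only if $G(X)$ is transcendental over $\mathbb{Q}(X)$.
   Context: The geometric realisation of $w$: replace each letter $w_n=a_j$ by a translated copy of an interval of length $\ell_j$, placed consecutively starting at the origin and proceeding to the right with no gaps, in the order $w_0,w_1,\dots$; $t_n$ is the left endpoint of the interval corresponding to $w_n$. A sequence is eventually periodic if there exist $N$, $d\ge1$ with $s_{n+d}=s_n$ for all $n\ge N$. Transcendence over $\mathbb{Q}(X)$ is meant inside $\mathbb{C}((X))$. *)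

From HB Require Import structures.
From mathcomp Require Import all_boot all_order all_algebra.
Set Implicit Arguments. Unset Strict Implicit. Unset Printing Implicit Defensive.
Import Order.TTheory GRing.Theory Num.Theory.
Local Open Scope ring_scope.

Definition nonerasing (k : nat) (sigma : 'I_k -> seq 'I_k) : Prop :=
  forall a, (0 < size (sigma a))%N.

Definition prefix (T : Type) (w : nat -> T) (n : nat) : seq T :=
  [seq w i | i <- iota 0 n].

(* w is a fixed point of sigma: sigma(w) = w, i.e. for every n the word
   sigma(w_0) ... sigma(w_{n-1}) is a prefix of w. *)
Definition is_fixed_word (k : nat) (sigma : 'I_k -> seq 'I_k) (w : nat -> 'I_k) : Prop :=
  forall n, let u := flatten [seq sigma a | a <- prefix w n] in
            u = prefix w (size u).

Definition eventually_periodic (T : Type) (s : nat -> T) : Prop :=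
  exists N d, (0 < d)%N /\ forall n, (N <= n)%N -> s (n + d)%N = s n.

Definition geom_real (k : nat) (l : 'I_k -> rat) (w : nat -> 'I_k) (n : nat) : rat :=
  \sum_(i < n) l (w i).

Definition pseries := nat -> rat.
Definition ps_mul (f g : pseries) : pseries :=
  fun n => \sum_(i < n.+1) f i * g (n - i)%N.
Definition ps_add (f g : pseries) : pseries := fun n => f n + g n.
Definition ps_zero : pseries := fun _ => 0.
Definition ps_one : pseries := fun n => if n == 0%N then 1 else 0.
Definition ps_pow (f : pseries) (i : nat) : pseries := iter i (ps_mul f) ps_one.
Definition ps_of_poly (p : {poly rat}) : pseries := fun n => p`_n.

(* evaluation P(X, F(X)) of P in Q[X][Y] at Y = F *)
Definition ps_eval (P : {poly {poly rat}}) (F : pseries) : pseries :=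
  \big[ps_add/ps_zero]_(i < size P) ps_mul (ps_of_poly P`_i) (ps_pow F i).

(* F algebraic over Q(X): a nonzero polynomial with coefficients in Q(X)
   (equivalently, after clearing denominators, in Q[X]) annihilates F. *)
Definition ps_algebraic (F : pseries) : Prop :=
  exists P : {poly {poly rat}}, P != 0 /\ forall n, ps_eval P F n = 0.

Definition ps_transcendental (F : pseries) : Prop := ~ ps_algebraic F.

From HB Require Import structures.
From mathcomp Require Import all_boot all_order all_algebra.
From mathcomp Require Import boolp zify ring.
Import Order.TTheory GRing.Theory Num.Theory.
Set Implicit Arguments. Unset Strict Implicit. Unset Printing Implicit Defensive.
Local Open Scope ring_scope.

(* Write U = sum_n g(w_n) X^n.  Then (1 - X) G = X U, so G is algebraic over
   Q(X) exactly when U is, and an eventually periodic U is rational.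
   Conversely an algebraic series is D-finite: if Q(X, U) = 0 with Q of least
   degree in Y, then A := Q_Y(X, U) is non-zero, differentiating Q(X, U) = 0
   gives A * theta U in Q[X][U] for the Euler operator theta = X d/dX, hence
   A^(2k) theta^k U in Q[X][U] for all k, and deg_Y Q + 1 of these are linearly
   dependent modulo Q.  Comparing coefficients turns the differential equation
   into a recurrence sum_s P_s(n) u_(n-s) = 0 with P_0 <> 0.  As u takes only
   finitely many values, from some index on every window (u_n, ..., u_(n-L))
   recurs infinitely often; the polynomial identity in n attached to a
   recurring window then vanishes identically, so the window determines the
   next value and the sequence is eventually periodic by pigeonhole. *)

(** * The ring of formal power series *)

Definition ps_opp (f : pseries) : pseries := fun n => - f n.

Lemma ps_addA : associative ps_add.
Proof. by move=> f g h; apply: funext => n; rewrite /ps_add addrA. Qed.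

Lemma ps_addC : commutative ps_add.
Proof. by move=> f g; apply: funext => n; rewrite /ps_add addrC. Qed.

Lemma ps_add0l : left_id ps_zero ps_add.
Proof. by move=> f; apply: funext => n; rewrite /ps_add add0r. Qed.

Lemma ps_addNl : left_inverse ps_zero ps_opp ps_add.
Proof. by move=> f; apply: funext => n; rewrite /ps_add addNr. Qed.

HB.instance Definition _ := Choice.on pseries.
HB.instance Definition _ :=
  GRing.isZmodule.Build pseries ps_addA ps_addC ps_add0l ps_addNl.

(* The n-th coefficient of [ps_mul f g] only involves the first n + 1
   coefficients of f and g, so the ring laws are inherited from {poly rat}
   through truncation. *)
Definition ps_trunc (n : nat) (f : pseries) : {poly rat} := \poly_(i < n.+1) f i.

Lemma coef_ps_trunc n m f : (n <= m)%N -> (ps_trunc m f)`_n = f n.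
Proof. by move=> le_nm; rewrite coef_poly ltnS le_nm. Qed.

Lemma eq_coefM (R : nzSemiRingType) n (p q p' q' : {poly R}) :
    (forall i, (i <= n)%N -> p`_i = p'`_i) ->
    (forall i, (i <= n)%N -> q`_i = q'`_i) ->
  (p * q)`_n = (p' * q')`_n.
Proof.
move=> pp' qq'; rewrite !coefM; apply: eq_bigr => i _.
by rewrite qq' ?leq_subr // pp' // -ltnS.
Qed.

Lemma coef_mul_ps_trunc n m f g : (n <= m)%N ->
  (ps_trunc m f * ps_trunc m g)`_n = ps_mul f g n.
Proof.
move=> le_nm; rewrite coefM; apply: eq_bigr => i _.
have le_in : (i <= n)%N by rewrite -ltnS.
by rewrite !coef_ps_trunc // (leq_trans _ le_nm) // (leq_trans (leq_subr _ _)).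
Qed.

Lemma coef_ps_trunc_mul n f g i : (i <= n)%N ->
  (ps_trunc n (ps_mul f g))`_i = (ps_trunc n f * ps_trunc n g)`_i.
Proof. by move=> le_in; rewrite coef_ps_trunc // coef_mul_ps_trunc. Qed.

Lemma ps_mulC : commutative ps_mul.
Proof.
move=> f g; apply: funext => n.
by rewrite -(coef_mul_ps_trunc f g (leqnn n)) -(coef_mul_ps_trunc g f (leqnn n)) mulrC.
Qed.

Lemma ps_mulA : associative ps_mul.
Proof.
move=> f g h; apply: funext => n.
rewrite -[LHS](coef_mul_ps_trunc _ _ (leqnn n)) -[RHS](coef_mul_ps_trunc _ _ (leqnn n)).
have -> : (ps_trunc n (ps_mul f g) * ps_trunc n h)`_n =
          (ps_trunc n f * ps_trunc n g * ps_trunc n h)`_n.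
  by apply: eq_coefM => [i|//]; exact: coef_ps_trunc_mul.
by rewrite -mulrA; apply: eq_coefM => [//|i /coef_ps_trunc_mul ->].
Qed.

Lemma ps_mul1l : left_id ps_one ps_mul.
Proof.
move=> f; apply: funext => n; rewrite /ps_mul big_ord_recl subn0 mul1r.
by rewrite big1 ?addr0 // => i _; rewrite mul0r.
Qed.

Lemma ps_mulDl : left_distributive ps_mul ps_add.
Proof.
move=> f g h; apply: funext => n; rewrite /ps_mul /ps_add -big_split.
by apply: eq_bigr => i _; rewrite mulrDl.
Qed.

Lemma ps_one_neq0 : ps_one != ps_zero.
Proof. by apply/eqP => /(congr1 (fun f : pseries => f 0%N)) /eqP; rewrite oner_eq0. Qed.

HB.instance Definition _ := GRing.Zmodule_isComNzRing.Build pseries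
  ps_mulA ps_mulC ps_mul1l ps_mulDl ps_one_neq0.

Lemma pseriesP (f g : pseries) : (forall n, f n = g n) -> f = g.
Proof. exact: funext. Qed.

Lemma coef_psD (f g : pseries) n : (f + g) n = f n + g n. Proof. by []. Qed.
Lemma coef_psN (f : pseries) n : (- f) n = - f n. Proof. by []. Qed.
Lemma coef_ps0 n : (0 : pseries) n = 0. Proof. by []. Qed.
Lemma coef_psM (f g : pseries) n :
  (f * g) n = \sum_(i < n.+1) f i * g (n - i)%N.
Proof. by []. Qed.

Lemma coef_ps_sum I (r : seq I) (P : pred I) (F : I -> pseries) n :
  (\sum_(i <- r | P i) F i) n = \sum_(i <- r | P i) F i n.
Proof. by elim/big_rec2: _ => // i x y _ <-. Qed.

Lemma ps_of_poly_is_zmod : zmod_morphism ps_of_poly.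
Proof. by move=> p q; apply: pseriesP => n; rewrite /ps_of_poly coefB. Qed.

Lemma ps_of_poly_is_monoid : monoid_morphism ps_of_poly.
Proof.
split=> [|p q]; apply: pseriesP => n; first by rewrite /ps_of_poly coefC.
by rewrite /ps_of_poly coefM.
Qed.

HB.instance Definition _ := GRing.isZmodMorphism.Build {poly rat} pseries
  ps_of_poly ps_of_poly_is_zmod.
HB.instance Definition _ := GRing.isMonoidMorphism.Build {poly rat} pseries
  ps_of_poly ps_of_poly_is_monoid.

Lemma ps_of_poly_inj : injective ps_of_poly.
Proof. by move=> p q pq; apply/polyP => i; apply: (congr1 (fun f => f i) pq). Qed.

Lemma ps_of_poly_eq0 p : (ps_of_poly p == 0) = (p == 0).
Proof. by rewrite -(inj_eq ps_of_poly_inj) rmorph0. Qed.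

Lemma coef_psXnM d (f : pseries) n :
  (ps_of_poly 'X^d * f) n = if (d <= n)%N then f (n - d)%N else 0.
Proof.
rewrite coef_psM; under eq_bigr do rewrite [ps_of_poly _ _]coefXn.
case: leqP => [le_dn | lt_nd].
  rewrite (bigD1 (Ordinal (le_dn : (d < n.+1)%N))) //= eqxx mul1r big1 ?addr0 //.
  by move=> i; rewrite -val_eqE /= => /negbTE ->; rewrite mul0r.
rewrite big1 // => i _; case: eqP => [i_eq_d|]; last by rewrite mul0r.
by have := ltn_ord i; rewrite i_eq_d ltnS leqNgt lt_nd.
Qed.

Lemma exists_coef_neq0 (f : pseries) : f != 0 -> exists n, f n != 0.
Proof.
move=> /eqP f_neq0; apply: contrapT => all0; apply: f_neq0; apply: pseriesP => n.
by apply/eqP; apply: contrapT => fn_neq0; apply: all0; exists n; apply/negP.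
Qed.

Lemma ps_mulf_neq0 (f g : pseries) : f != 0 -> g != 0 -> f * g != 0.
Proof.
move=> /exists_coef_neq0 f_ex /exists_coef_neq0 g_ex.
have [i fi_neq0 fi_min] := ex_minnP f_ex.
have [j gj_neq0 gj_min] := ex_minnP g_ex.
apply/eqP => /(congr1 (fun h : pseries => h (i + j)%N)) /eqP.
have lt_i : (i < (i + j).+1)%N by rewrite ltnS leq_addr.
rewrite coef_psM (bigD1 (Ordinal lt_i)) //= addKn big1 ?addr0.
  by rewrite mulf_eq0 (negbTE fi_neq0) (negbTE gj_neq0).
move=> [a lt_a]; rewrite -val_eqE /= => ne_ai.
case: (ltngtP a i) ne_ai => // [lt_ai | lt_ia] _.
  apply/eqP; rewrite mulf_eq0; apply: contraLR lt_ai => /norP [/fi_min + _].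
  by rewrite -leqNgt.
apply/eqP; rewrite mulf_eq0; apply: contraLR lt_ia => /norP [_ /gj_min le_j].
by rewrite -leqNgt; move: le_j lt_a; lia.
Qed.

Lemma ps_mulf_eq0 (f g : pseries) : (f * g == 0) = (f == 0) || (g == 0).
Proof.
apply/idP/idP => [|/orP [] /eqP ->]; rewrite ?mul0r ?mulr0 //.
by apply: contraLR; rewrite negb_or => /andP [/ps_mulf_neq0 fg /fg].
Qed.

Lemma ps_expf_neq0 (f : pseries) m : f != 0 -> f ^+ m != 0.
Proof.
by move=> f_neq0; elim: m => [|m IHm]; rewrite ?expr0 ?oner_eq0 // exprS ps_mulf_neq0.
Qed.

Definition ps_euler (f : pseries) : pseries := fun n => n%:R * f n.

Lemma ps_euler_is_zmod : zmod_morphism ps_euler.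
Proof. by move=> f g; apply: pseriesP => n; rewrite /ps_euler !coef_psD !coef_psN mulrBr. Qed.

HB.instance Definition _ := GRing.isZmodMorphism.Build pseries pseries
  ps_euler ps_euler_is_zmod.

Lemma ps_eulerM f g : ps_euler (f * g) = ps_euler f * g + f * ps_euler g.
Proof.
apply: pseriesP => n; rewrite /ps_euler coef_psD !coef_psM mulr_sumr -big_split.
apply: eq_bigr => -[i /= lt_in] _.
by rewrite -{1}(subnKC (lt_in : (i <= n)%N)) natrD; ring.
Qed.

Lemma ps_euler1 : ps_euler 1 = 0.
Proof. by apply: pseriesP => -[|n]; rewrite /ps_euler /= ?mul0r ?mulr0. Qed.

Lemma mul_ps_eulerX f m : f * ps_euler (f ^+ m) = ps_euler f * f ^+ m *+ m.
Proof.
elim: m => [|m IHm]; first by rewrite expr0 ps_euler1 mulr0 mulr0n.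
by rewrite exprS ps_eulerM mulrDr mulrCA IHm mulrS -mulrnAr; ring.
Qed.

Lemma iter_ps_eulerE i x n : iter i ps_euler x n = n%:R ^+ i * x n.
Proof. by elim: i => [|i IHi] /=; rewrite ?expr0 ?mul1r // /ps_euler IHi exprS mulrA. Qed.

Lemma ps_euler_of_poly p : ps_euler (ps_of_poly p) = ps_of_poly ('X * p^`()).
Proof.
apply: pseriesP => -[|n]; rewrite /ps_euler /ps_of_poly coefXM ?mul0r //=.
by rewrite coef_deriv mulr_natl.
Qed.

Definition ps_horner (x : pseries) : {poly {poly rat}} -> pseries :=
  horner_morph (fun c : {poly rat} => mulrC x (ps_of_poly c)).

HB.instance Definition _ x := GRing.RMorphism.on (ps_horner x).

Lemma ps_hornerC x c : ps_horner x c%:P = ps_of_poly c.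
Proof. exact: horner_morphC. Qed.

Lemma ps_hornerX x : ps_horner x 'X = x.
Proof. exact: horner_morphX. Qed.

Lemma ps_hornerZ x c S : ps_horner x (c *: S) = ps_of_poly c * ps_horner x S.
Proof. by rewrite -mul_polyC rmorphM /= ps_hornerC. Qed.

Lemma ps_horner_coef_wide x (S : {poly {poly rat}}) n : (size S <= n)%N ->
  ps_horner x S = \sum_(i < n) ps_of_poly S`_i * x ^+ i.
Proof.
move=> le_Sn; rewrite /ps_horner /horner_morph.
rewrite (horner_coef_wide _ (leq_trans (size_poly _ _) le_Sn)).
by apply: eq_bigr => i _; rewrite coef_map.
Qed.

Lemma ps_evalE P F : ps_eval P F = ps_horner F P.
Proof.
rewrite (ps_horner_coef_wide _ (leqnn _)); apply: eq_bigr => i _.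
by congr (_ * _); elim: (nat_of_ord i) => //= i' ->; rewrite exprS.
Qed.

Definition euler_coefs (S : {poly {poly rat}}) : {poly {poly rat}} :=
  map_poly (fun c => 'X * c^`()) S.

Lemma euler_coefsMXaddC (S : {poly {poly rat}}) c :
  euler_coefs (S * 'X + c%:P) = euler_coefs S * 'X + ('X * c^`())%:P.
Proof.
apply/polyP => i; rewrite coefD coefMX coefC /euler_coefs.
rewrite !coef_map_id0 ?deriv0 ?mulr0 // coefD coefMX coefC.
by case: i => [|i] /=; rewrite ?add0r ?addr0 ?coef_map_id0 ?deriv0 ?mulr0 // derivD deriv0.
Qed.

Lemma ps_euler_horner x (S : {poly {poly rat}}) :
  ps_euler (ps_horner x S) = ps_horner x (euler_coefs S) + ps_horner x S^`() * ps_euler x.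
Proof.
elim/poly_ind: S => [|S c IHS].
  by rewrite /euler_coefs map_poly0 deriv0 !rmorph0 raddf0 mul0r addr0.
rewrite euler_coefsMXaddC derivMXaddC !rmorphD !rmorphM /= !ps_hornerX !ps_hornerC.
by rewrite raddfD /= ps_eulerM IHS ps_euler_of_poly; ring.
Qed.

(** * Algebraic series are D-finite *)

Lemma ps_algebraicE F :
  ps_algebraic F <-> exists2 P, P != 0 & ps_horner F P = 0.
Proof.
split=> [[P [P_neq0 PF0]] | [P P_neq0 PF0]]; exists P => //.
  by apply: pseriesP => n; rewrite -ps_evalE PF0.
by split=> // n; rewrite ps_evalE PF0.
Qed.

Lemma deriv_eq0_polyC (P : {poly {poly rat}}) : P^`() = 0 -> P = (P`_0)%:P.
Proof.
move=> dP0; apply/polyP => -[|i]; rewrite coefC //=.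
have /eqP := congr1 (fun p : {poly {poly rat}} => p`_i) dP0; rewrite coef_deriv coef0.
by rewrite -mulr_natr mulf_eq0 -polyC_natr polyC_eq0 pnatr_eq0 orbF => /eqP.
Qed.

Lemma algebraic_annihilator_deriv (x : pseries) : ps_algebraic x ->
  exists Q, ps_horner x Q = 0 /\ ps_horner x Q^`() != 0.
Proof.
move=> /ps_algebraicE [P]; move: {2}(size P).+1 (ltnSn (size P)) => n.
elim: n P => // n IHn P lt_Pn P_neq0 Px0.
have [dPx0 | ] := eqVneq (ps_horner x P^`()) 0; last by exists P.
have [/deriv_eq0_polyC P_const | dP_neq0] := eqVneq P^`() 0.
  move: Px0 P_neq0; rewrite P_const ps_hornerC => /eqP.
  by rewrite ps_of_poly_eq0 polyC_eq0 => ->.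
by apply: (IHn P^`()) => //; exact: leq_trans (lt_size_deriv P_neq0) _.
Qed.

Lemma poly_dependent_size_le (D : idomainType) n m (v : 'I_m -> {poly D}) :
  (n < m)%N -> (forall i, size (v i) <= n)%N ->
  exists2 c : 'I_m -> D, (exists i, c i != 0) & \sum_i c i *: v i = 0.
Proof.
elim: n m v => [|n IHn] [//|m] v lt_nm size_v.
  exists (fun=> 1); first by exists ord0; rewrite oner_eq0.
  by apply: big1 => i _; have /size_poly_leq0P -> := size_v i; rewrite scaler0.
case: (boolP [forall i, (v i)`_n == 0]) => [/forallP top0 | /forallPn [j vj_neq0]].
  apply: IHn => [|i]; first exact: ltnW.
  apply/leq_sizeP => k; rewrite leq_eqVlt => /orP [/eqP <- | lt_nk].
    exact/eqP/top0.
  exact: (leq_sizeP _ _ (size_v i)).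
set a := (v j)`_n.
pose u k := a *: v (lift j k) - (v (lift j k))`_n *: v j.
have [c' [k0 c'k0_neq0] sum_c'u] :
    exists2 c' : 'I_m -> D, (exists k, c' k != 0) & \sum_k c' k *: u k = 0.
  apply: IHn => // k; apply/leq_sizeP => i; rewrite leq_eqVlt => /orP [/eqP <- | lt_ni].
    by rewrite coefB !coefZ mulrC subrr.
  have vi0 k' : (v k')`_i = 0 by exact: (leq_sizeP _ _ (size_v k')).
  by rewrite coefB !coefZ !vi0 !mulr0 subrr.
pose c i := if unlift j i is Some k then c' k * a
            else - \sum_k c' k * (v (lift j k))`_n.
exists c; first by exists (lift j k0); rewrite /c liftK mulf_neq0.
rewrite (bigD1_ord j) //= /c unlift_none.
under eq_bigr do rewrite liftK.
rewrite -[RHS]sum_c'u scaleNr scaler_suml addrC -sumrN -big_split /=.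
by apply: eq_bigr => k _; rewrite /u scalerBr !scalerA.
Qed.

Lemma ps_horner_modp x (Q S : {poly {poly rat}}) : ps_horner x Q = 0 ->
  ps_horner x (S %% Q) = ps_of_poly (lead_coef Q ^+ scalp S Q) * ps_horner x S.
Proof.
move=> Qx0; rewrite -ps_hornerZ Pdiv.Idomain.divp_eq rmorphD rmorphM /=.
by rewrite Qx0 mulr0 add0r.
Qed.

Definition poly_in (x y : pseries) : Prop := exists S, y = ps_horner x S.

Definition ps_dfinite (x : pseries) : Prop :=
  exists m (c : 'I_m -> {poly rat}),
    (exists i, c i != 0) /\ \sum_i ps_of_poly (c i) * iter i ps_euler x = 0.

Section AnnihilatorDFinite.

Variables (x : pseries) (Q : {poly {poly rat}}).
Hypotheses (Qx0 : ps_horner x Q = 0) (dQx_neq0 : ps_horner x Q^`() != 0).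
Let A := ps_horner x Q^`().

Lemma poly_in_mul_euler y : poly_in x y -> poly_in x (A * ps_euler y).
Proof.
have : A * ps_euler x = - ps_horner x (euler_coefs Q).
  by apply/eqP; rewrite -addr_eq0 addrC -ps_euler_horner Qx0 raddf0.
move=> Aeuler_x [S ->]; exists (Q^`() * euler_coefs S - S^`() * euler_coefs Q).
by rewrite ps_euler_horner rmorphB !rmorphM /= mulrDr mulrCA Aeuler_x mulrN.
Qed.

(* The second factor of A absorbs [ps_euler A], which need not be in Q[X][x]. *)
Lemma poly_in_iter_euler k : poly_in x (A ^+ (2 * k) * iter k ps_euler x).
Proof.
elim: k => [|k [S eS]]; first by exists 'X; rewrite expr0 mul1r ps_hornerX.
set e := A ^+ (2 * k) * _ in eS.
have [T1 eT1] := poly_in_mul_euler (ex_intro _ S eS).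
have [T2 eT2] := poly_in_mul_euler (ex_intro _ Q^`() erefl).
exists (Q^`() * T1 - T2 * S *+ (2 * k)).
rewrite rmorphB rmorphMn !rmorphM /= -eT1 -eT2 -eS /e ps_eulerM mulrDr mulrA.
by rewrite mul_ps_eulerX mulnS exprD -/A; ring.
Qed.

Lemma annihilator_dfinite : ps_dfinite x.
Proof.
have Q_neq0 : Q != 0 by apply: contraNneq dQx_neq0 => ->; rewrite deriv0 rmorph0.
set d := (size Q).-1.
have size_Q : size Q = d.+1 by rewrite prednK // size_poly_gt0.
pose y (i : 'I_d.+1) := A ^+ (2 * d) * iter i ps_euler x.
have /choice [S yE] : forall i, exists S, y i = ps_horner x S.
  move=> i; have [S eS] := poly_in_iter_euler i.
  exists (Q^`() ^+ (2 * (d - i)) * S); rewrite rmorphM rmorphXn /= -eS -/A mulrA.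
  by rewrite -exprD -mulnDr subnK // -ltnS.
pose r i := S i %% Q.
have size_r i : (size (r i) <= d)%N by rewrite -ltnS -size_Q ltn_modpN0.
have [c [i0 ci0_neq0] sum_cr] := poly_dependent_size_le (ltnSn d) size_r.
exists d.+1, (fun i => c i * lead_coef Q ^+ scalp (S i) Q); split.
  by exists i0; rewrite mulf_neq0 // expf_neq0 // lead_coef_eq0.
have /eqP := congr1 (ps_horner x) sum_cr.
rewrite rmorph0 rmorph_sum /=.
under eq_bigr do rewrite ps_hornerZ ps_horner_modp // -yE /y mulrA -rmorphM mulrCA.
rewrite -mulr_sumr ps_mulf_eq0 (negbTE (ps_expf_neq0 _ dQx_neq0)) /=.
exact/eqP.
Qed.

End AnnihilatorDFinite.

Lemma algebraic_dfinite x : ps_algebraic x -> ps_dfinite x.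
Proof.
move=> /algebraic_annihilator_deriv [Q [Qx0 dQx_neq0]].
exact: annihilator_dfinite Qx0 dQx_neq0.
Qed.

(** * D-finite series satisfy polynomial recurrences *)

Definition precursive (u : nat -> rat) : Prop :=
  exists L (P : nat -> {poly rat}) N, P 0%N != 0 /\
    forall n, (N <= n)%N -> \sum_(i < L.+1) (P i).[n%:R] * u (n - i)%N = 0.

Section DFinitePRecursive.

Variables (m : nat) (c : 'I_m -> {poly rat}) (x : pseries).
Hypotheses (c_neq0 : exists i, c i != 0)
           (sum_cx : \sum_i ps_of_poly (c i) * iter i ps_euler x = 0).

(* [(rec_poly j).[n - j] * x (n - j)] is the contribution of [x (n - j)] to the
   n-th coefficient of the differential equation. *)
Let rec_poly j : {poly rat} := \sum_(i < m) (c i)`_j *: 'X^i.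
Let J := (\max_(i < m) size (c i))%N.

Lemma coef_rec_poly j (i : 'I_m) : (rec_poly j)`_i = (c i)`_j.
Proof. by rewrite coef_sumMXn (big_pred1 i) // => k; exact: val_eqE. Qed.

Lemma rec_poly_rel n : \sum_(j < n.+1) (rec_poly j).[(n - j)%:R] * x (n - j)%N = 0.
Proof.
rewrite -[RHS](coef_ps0 n) -sum_cx coef_ps_sum.
under [RHS]eq_bigr do rewrite coef_psM.
rewrite exchange_big /=; apply: eq_bigr => j _.
rewrite horner_sum mulr_suml; apply: eq_bigr => i _.
by rewrite hornerZ hornerXn iter_ps_eulerE mulrA.
Qed.

Lemma rec_poly_eq0 j : (J <= j)%N -> rec_poly j = 0.
Proof.
move=> le_Jj; apply: big1 => i _; rewrite nth_default ?scale0r //.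
exact: leq_trans (leq_bigmax (F := fun k => size (c k)) i) le_Jj.
Qed.

Lemma exists_rec_poly_neq0 : exists j, rec_poly j != 0.
Proof.
have [i ci_neq0] := c_neq0; exists (size (c i)).-1.
apply: contra ci_neq0 => /eqP rec_j_eq0.
have := coef_rec_poly (size (c i)).-1 i; rewrite rec_j_eq0 coef0 -lead_coefE.
by move=> /esym/eqP; rewrite lead_coef_eq0.
Qed.

Lemma dfinite_coefs_precursive : precursive x.
Proof.
have [j0 rec_j0_neq0 j0_min] := ex_minnP exists_rec_poly_neq0.
have lt_j0J : (j0 < J)%N by rewrite ltnNge; apply: contra rec_j0_neq0 => /rec_poly_eq0 ->.
exists (J - j0.+1)%N, (fun s => rec_poly (j0 + s) \Po ('X - s%:R%:P)), J.
split=> [|n le_Jn]; first by rewrite subr0 comp_polyXr addn0.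
pose F j := (rec_poly j).[(n + j0 - j)%:R] * x (n + j0 - j)%N.
have F_lt j : (j < j0)%N -> F j = 0.
  move=> lt_jj0; have rec_j_eq0 : rec_poly j = 0.
    by apply/eqP; apply: contraTT lt_jj0 => /j0_min; rewrite -leqNgt.
  by rewrite /F rec_j_eq0 horner0 mul0r.
have F_ge j : (J <= j)%N -> F j = 0.
  by move/rec_poly_eq0; rewrite /F => ->; rewrite horner0 mul0r.
have sum0 a b : (forall j, (a <= j < b)%N -> F j = 0) -> \sum_(a <= j < b) F j = 0.
  by move=> Fab0; rewrite big1_seq // => j /=; rewrite mem_index_iota => /Fab0.
rewrite -[RHS](rec_poly_rel (n + j0)) -(big_mkord xpredT F).
rewrite (@big_cat_nat _ _ _ j0) //=; last by rewrite ltnW // ltnS leq_addl.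
rewrite sum0 ?add0r; last by move=> j /andP [_ /F_lt].
rewrite (@big_cat_nat _ _ _ J) /=;
  [|exact: ltnW lt_j0J|by rewrite leqW // (leq_trans le_Jn) ?leq_addr].
rewrite [X in _ + X]sum0 ?addr0; last by move=> j /andP [/F_ge].
rewrite -[in RHS](add0n j0) big_addn subnSK // big_mkord.
apply: eq_bigr => s _; rewrite /F addnC subnDr horner_comp hornerXsubC natrB //.
by have := ltn_ord s; lia.
Qed.

End DFinitePRecursive.

Lemma dfinite_precursive x : ps_dfinite x -> precursive x.
Proof. by move=> [m [c [c_neq0 sum_cx]]]; exact: dfinite_coefs_precursive c_neq0 sum_cx. Qed.

(** * Finitely-valued P-recursive sequences are eventually periodic *)

Lemma poly_eq0_of_unbounded_roots (R : numDomainType) (p : {poly R}) :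
  (forall N, exists2 n, (N <= n)%N & p.[n%:R] = 0) -> p = 0.
Proof.
move=> roots; have /choice [g gP] : forall N, exists n, (N <= n)%N && root p n%:R.
  by move=> N; have [n le_Nn pn0] := roots N; exists n; rewrite le_Nn /root pn0 eqxx.
pose r k := iter k (fun n => g n.+1) (g 0%N).
have r_inj : injective r.
  apply/incn_inj/leq_mono/(homo_ltn ltn_trans) => k.
  by case/andP: (gP (r k).+1).
apply: (@roots_geq_poly_eq0 _ p [seq (r k)%:R | k <- iota 0 (size p)]).
- apply/allP => _ /mapP [[|k] _ ->].
    by case/andP: (gP 0%N) => _ root_g.
  by case/andP: (gP (r k).+1) => _ root_g.
- rewrite map_inj_uniq ?iota_uniq // => k1 k2 /eqP.
  by rewrite eqr_nat => /eqP /r_inj.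
- by rewrite size_map size_iota.
Qed.

Lemma eventually_recurrent (T : finType) (f : nat -> T) :
  exists N, forall n, (N <= n)%N -> forall M, exists2 m, (M <= m)%N & f m = f n.
Proof.
have /choice [B BP] : forall t : T, exists B,
    (forall M, exists2 m, (M <= m)%N & f m = t) \/ forall m, (B <= m)%N -> f m != t.
  move=> t; case: (pselect (forall M, exists2 m, (M <= m)%N & f m = t)) => [recur|].
    by exists 0%N; left.
  move=> /existsNP [B not_after_B]; exists B; right => m le_Bm.
  by apply/eqP => fmt; apply: not_after_B; exists m.
exists (\max_t B t)%N => n le_n M; case: (BP (f n)) => [|fin]; first exact.
by have := fin n (leq_trans (leq_bigmax (F := B) (f n)) le_n); rewrite eqxx.
Qed.

Section PRecursiveFiniteRange.

Variables (u : nat -> rat) (s : seq rat) (L : nat) (P : nat -> {poly rat}) (N0 : nat).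
Hypotheses (u_in : forall n, u n \in s) (P0_neq0 : P 0%N != 0)
  (u_rec : forall n, (N0 <= n)%N -> \sum_(i < L.+1) (P i).[n%:R] * u (n - i)%N = 0).

Definition window n : L.+1.-tuple (seq_sub s) :=
  [tuple SeqSub (u_in (n - i)) | i < L.+1].

Definition recurrent_window (t : L.+1.-tuple (seq_sub s)) : Prop :=
  forall M, exists2 n, (M <= n)%N & window n = t.

Lemma tnth_window n i : val (tnth (window n) i) = u (n - i)%N.
Proof. by rewrite tnth_mktuple. Qed.

Definition window_poly (t : L.+1.-tuple (seq_sub s)) : {poly rat} :=
  \sum_(i < L.+1) P i * (val (tnth t i))%:P.

Lemma recurrent_window_poly t : recurrent_window t -> window_poly t = 0.
Proof.
move=> recur; apply: poly_eq0_of_unbounded_roots => M.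
have [n le_n <-] := recur (maxn M N0); exists n; first exact: leq_trans (leq_maxl _ _) le_n.
rewrite -[RHS](u_rec (leq_trans (leq_maxr _ _) le_n)) horner_sum.
by apply: eq_bigr => i _; rewrite hornerM hornerC tnth_window.
Qed.

Lemma recurrent_window_determined t t' :
    recurrent_window t -> recurrent_window t' ->
    (forall i : 'I_L.+1, i != ord0 -> tnth t i = tnth t' i) ->
  t = t'.
Proof.
move=> /recurrent_window_poly t0 /recurrent_window_poly t'0 tt'.
have : window_poly t - window_poly t' = P 0%N * (val (tnth t ord0) - val (tnth t' ord0))%:P.
  rewrite /window_poly -sumrB big_ord_recl big1 ?addr0 => [|i _].
    by rewrite -mulrBr -polyCB.
  by rewrite tt' ?subrr // -(inj_eq val_inj) /= (lift0 i).
rewrite t0 t'0 subrr => /esym/eqP; rewrite mulf_eq0 (negbTE P0_neq0) polyC_eq0 subr_eq0.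
move=> /eqP/val_inj t0_eq; apply: eq_from_tnth => i.
by have [->|/tt'] := eqVneq i ord0.
Qed.

Lemma window_succ n1 n2 : window n1 = window n2 ->
  forall i : 'I_L.+1, i != ord0 -> tnth (window n1.+1) i = tnth (window n2.+1) i.
Proof.
move=> w12 i i_neq0; apply: val_inj; rewrite !tnth_window.
have lt_iL : (i.-1 < L.+1)%N by rewrite (leq_ltn_trans (leq_pred _)).
have := congr1 (fun t => val (tnth t (Ordinal lt_iL))) w12; rewrite /= !tnth_window.
have i_pos : (0 < i)%N by rewrite lt0n.
have sub_pred n : (n.+1 - i = n - i.-1)%N by lia.
by rewrite !sub_pred.
Qed.

Lemma finite_range_recurrence_periodic : eventually_periodic u.
Proof.
have [N recur] := eventually_recurrent window.
have step n1 n2 : (N <= n1)%N -> (N <= n2)%N ->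
    window n1 = window n2 -> window n1.+1 = window n2.+1.
  move=> le_n1 le_n2 w12.
  by apply: recurrent_window_determined; [apply: recur; exact: leqW..|exact: window_succ].
have shift n1 n2 k : (N <= n1)%N -> (N <= n2)%N ->
    window n1 = window n2 -> window (n1 + k) = window (n2 + k).
  move=> le_n1 le_n2 w12; elim: k => [|k IHk]; first by rewrite !addn0.
  by rewrite !addnS; apply: step; rewrite // (leq_trans _ (leq_addr _ _)).
pose f (i : 'I_#|{: L.+1.-tuple (seq_sub s)}|.+1) := window (N + i).
have /injectivePn [i [j ne_ij eq_ij]] : ~~ injectiveb f.
  by apply/injectiveP => /leq_card; rewrite card_ord ltnn.
wlog lt_ij : i j ne_ij eq_ij / (i < j)%N.
  move=> wlog_lt; have [lt_ij|lt_ji|eq_ij'] := ltngtP i j; first exact: wlog_lt lt_ij.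
    by apply: (wlog_lt j i); rewrite // eq_sym.
  by move: ne_ij; rewrite -val_eqE /= eq_ij' eqxx.
exists (N + i)%N, (j - i)%N; split=> [|n le_n]; first by rewrite subn_gt0.
have := congr1 (fun t => val (tnth t ord0))
  (shift _ _ (n - (N + i))%N (leq_addr _ _) (leq_addr _ _) (esym eq_ij)).
by rewrite /= !tnth_window !subn0; congr (u _ = u _); lia.
Qed.

End PRecursiveFiniteRange.

Lemma precursive_periodic (u : nat -> rat) (s : seq rat) :
  (forall n, u n \in s) -> precursive u -> eventually_periodic u.
Proof.
move=> u_in [L [P [N0 [P0_neq0 u_rec]]]].
exact: finite_range_recurrence_periodic u_in P0_neq0 u_rec.
Qed.

Lemma oneBXn_neq0 d : (0 < d)%N -> (1 - 'X^d : {poly rat}) != 0.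
Proof.
move=> d_gt0; apply/eqP => /(congr1 (fun p : {poly rat} => p`_0)) /eqP.
by rewrite coefB coef1 coefXn coef0; case: d d_gt0 => //= d _; rewrite subr0 oner_eq0.
Qed.

Lemma eventually_periodic_rational (u : pseries) : eventually_periodic u ->
  exists2 q : {poly rat}, q != 0 & exists p, ps_of_poly q * u = ps_of_poly p.
Proof.
move=> [N [d [d_gt0 u_per]]]; exists (1 - 'X^d); first exact: oneBXn_neq0.
exists (ps_trunc (N + d) (ps_of_poly (1 - 'X^d) * u)).
apply: pseriesP => n; rewrite [RHS]/ps_of_poly coef_poly; case: ltnP => // lt_n.
rewrite rmorphB rmorph1 mulrBl mul1r coef_psD coef_psN coef_psXnM ifT; last by lia.
have le_Nn : (N <= n - d)%N by lia.
by rewrite -[in u n](subnK (_ : d <= n)%N) ?u_per ?subrr //; lia.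
Qed.

Lemma rational_ps_algebraic (f : pseries) (q p : {poly rat}) :
  q != 0 -> ps_of_poly q * f = ps_of_poly p -> ps_algebraic f.
Proof.
move=> q_neq0 qf; apply/ps_algebraicE; exists (q%:P * 'X - p%:P).
  apply: contra q_neq0 => /eqP/(congr1 (fun P : {poly {poly rat}} => P`_1)).
  by rewrite coefB coefMX !coefC /= subr0 => ->.
by rewrite raddfB /= rmorphM /= !ps_hornerC ps_hornerX qf subrr.
Qed.

Lemma ps_algebraic_transfer (f g : pseries) (p q : {poly rat}) :
    p != 0 -> q != 0 -> ps_of_poly p * f = ps_of_poly q * g ->
  ps_algebraic g -> ps_algebraic f.
Proof.
move=> p_neq0 q_neq0 pf_qg /ps_algebraicE [P P_neq0 Pg0]; apply/ps_algebraicE.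
set m := size P.
exists (\poly_(i < m) (P`_i * p ^+ i * q ^+ (m - i))).
  have lt_m : (m.-1 < m)%N by rewrite prednK // size_poly_gt0.
  apply/eqP => /(congr1 (fun Q : {poly {poly rat}} => Q`_m.-1)) /eqP.
  rewrite coef_poly lt_m coef0 !mulf_eq0 -lead_coefE lead_coef_eq0 (negbTE P_neq0).
  by rewrite !expf_eq0 (negbTE p_neq0) (negbTE q_neq0) !andbF.
transitivity (ps_of_poly (q ^+ m) * ps_horner g P); last by rewrite Pg0 mulr0.
rewrite !(ps_horner_coef_wide _ (size_poly _ _)) (ps_horner_coef_wide _ (leqnn m)).
rewrite mulr_sumr; apply: eq_bigr => i _.
have pfi : (ps_of_poly p * f) ^+ i = (ps_of_poly q * g) ^+ i by rewrite pf_qg.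
have qm : ps_of_poly q ^+ m = ps_of_poly q ^+ (m - i) * ps_of_poly q ^+ i.
  by rewrite -exprD subnK // ltnW.
rewrite coef_poly ltn_ord !rmorphM !rmorphXn /= qm.
move: pfi (ps_of_poly q ^+ (m - i)); rewrite !exprMn => pfi c.
transitivity (ps_of_poly P`_i * c * (ps_of_poly p ^+ i * f ^+ i)); first by ring.
by rewrite pfi; ring.
Qed.

Lemma ps_partial_sums (u : pseries) :
  ps_of_poly (1 - 'X) * (fun n => \sum_(i < n) u i : rat) = ps_of_poly 'X * u.
Proof.
apply: pseriesP => n; rewrite rmorphB rmorph1 mulrBl mul1r coef_psD coef_psN.
rewrite -(expr1 'X) !coef_psXnM; case: n => [|n] /=; first by rewrite big_ord0 subr0.
by rewrite subn1 big_ord_recr /= addrAC subrr add0r.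
Qed.

Theorem mainTheorem13 (k : nat) (sigma : 'I_k -> seq 'I_k) (w : nat -> 'I_k)
    (l : 'I_k -> rat) :
  nonerasing sigma ->
  is_fixed_word sigma w ->
  (forall j, 0 < l j) ->
  ~ eventually_periodic (fun n => l (w n)) <->
  ps_transcendental (geom_real l w).
Proof.
move=> _ _ _; pose u : pseries := fun n => l (w n).
have sums : ps_of_poly (1 - 'X) * geom_real l w = ps_of_poly 'X * u.
  exact: ps_partial_sums.
have X_neq0 : ('X : {poly rat}) != 0 by rewrite polyX_eq0.
have oneBX_neq0 : (1 - 'X : {poly rat}) != 0 by rewrite -(expr1 'X) oneBXn_neq0.
split=> [aperiodic G_alg | G_transc u_per].
  apply: aperiodic; apply: (@precursive_periodic _ (codom l)) => [n|].
    exact: codom_f.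
  apply/dfinite_precursive/algebraic_dfinite.
  exact: ps_algebraic_transfer X_neq0 oneBX_neq0 (esym sums) G_alg.
apply: G_transc; apply: ps_algebraic_transfer oneBX_neq0 X_neq0 sums _.
have [q q_neq0 [p qu]] := eventually_periodic_rational u_per.
exact: rational_ps_algebraic q_neq0 qu.
Qed.
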